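(* Let $R$ and $S$ be commutative rings with identity, $f:R\to S$ a ring homomorphism, and $J$ a nonzero proper ideal of $S$. Suppose $R$ is compactly packed. Then for any family $\{\mathfrak{p}_\alpha\}_{\alpha\in\Lambda}$ of prime ideals of $R$, the subset $\{\mathfrak{p}_\alpha^{\prime_f}\}_{\alpha\in\Lambda}$ of $\operatorname{Spec}(R\bowtie^f J)$ is compactly packed.
   Context: $R\bowtie^f J:=\{(r,f(r)+j)\mid r\in R,\ j\in J\}$, a subring of $R\times S$. For a prime ideal $\mathfrak{p}$ of $R$, $\mathfrak{p}^{\prime_f}:=\{(p,f(p)+j)\mid p\in\mathfrak{p},\ j\in J\}$, which is a prime ideal of $R\bowtie^f J$. For a commutative ring $A$, a subset $X\subseteq\operatorname{Spec}(A)$ is compactly packed if whenever an ideal $I$ of $A$ is contained in the union of a family $\{\mathfrak{p}_i\}_i$ of elements of $X$, then $I\subseteq\mathfrak{p}_i$ for some $i$; $A$ is compactly packed if $\operatorname{Spec}(A)$ is compactly packed. *)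

From HB Require Import structures.
From mathcomp Require Import all_boot all_order all_algebra.
Set Implicit Arguments. Unset Strict Implicit. Unset Printing Implicit Defensive.
Import GRing.Theory.
Local Open Scope ring_scope.

Definition is_ideal (R : comPzRingType) (I : R -> Prop) : Prop :=
  [/\ I 0, (forall x y, I x -> I y -> I (x + y)) & (forall r x, I x -> I (r * x))].

Definition is_prime_ideal (R : comPzRingType) (P : R -> Prop) : Prop :=
  [/\ is_ideal P, ~ P 1 & (forall x y, P (x * y) -> P x \/ P y)].

(* Amalgamation R ⋈^f J = {(r, f r + j) | r in R, j in J}, as a subset of R x S
   (a subring of the product ring, with componentwise operations). *)
Definition amalg (R S : comPzRingType) (f : {rmorphism R -> S}) (J : S -> Prop)
  : R * S -> Prop :=
  fun x => exists r j, J j /\ x = (r, f r + j).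

Definition pmul (R S : comPzRingType) (x y : R * S) : R * S := (x.1 * y.1, x.2 * y.2).
Definition padd (R S : comPzRingType) (x y : R * S) : R * S := (x.1 + y.1, x.2 + y.2).

Definition is_amalg_ideal (R S : comPzRingType) (f : {rmorphism R -> S})
  (J : S -> Prop) (I : R * S -> Prop) : Prop :=
  [/\ (forall x, I x -> amalg f J x), I (0, 0),
      (forall x y, I x -> I y -> I (padd x y))
    & (forall a x, amalg f J a -> I x -> I (pmul a x))].

Definition prime_lift (R S : comPzRingType) (f : {rmorphism R -> S})
  (J : S -> Prop) (P : R -> Prop) : R * S -> Prop :=
  fun x => exists p j, [/\ P p, J j & x = (p, f p + j)].

Definition compactly_packed_set (T : Type) (isIdeal : (T -> Prop) -> Prop)
  (X : (T -> Prop) -> Prop) : Prop :=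
  forall (I : T -> Prop), isIdeal I ->
  forall (Idx : Type) (q : Idx -> T -> Prop),
    (forall i, X (q i)) ->
    (forall x, I x -> exists i, q i x) ->
    exists i, forall x, I x -> q i x.

Definition compactly_packed_ring (R : comPzRingType) : Prop :=
  compactly_packed_set (@is_ideal R) (@is_prime_ideal R).

(* An ideal I of R ⋈^f J lies in the lift p^{'_f} exactly when its first
   projection π(I) = {r | (r, s) ∈ I for some s} lies in p, because p^{'_f}
   consists of the elements of R ⋈^f J whose first coordinate is in p.  So a
   covering of I by lifts projects to a covering of the ideal π(I) of R by the
   primes themselves, and compact packedness of R returns a single prime
   containing π(I). *)
From mathcomp Require Import all_boot all_order all_algebra.
Local Open Scope ring_scope.
Import GRing.Theory.

Set Implicit Arguments.

Lemma compactly_packed_setS (T : Type) (isIdeal : (T -> Prop) -> Prop)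
    (X Y : (T -> Prop) -> Prop) :
  (forall P, X P -> Y P) ->
  compactly_packed_set isIdeal Y -> compactly_packed_set isIdeal X.
Proof.
move=> XY packedY I HI Idx q Xq cover.
exact: packedY HI Idx q (fun i => XY _ (Xq i)) cover.
Qed.

Definition fst_image (A B : Type) (I : A * B -> Prop) : A -> Prop :=
  fun a => exists b, I (a, b).

Section Amalgamation.

Variables (R S : comPzRingType) (f : {rmorphism R -> S}) (J : S -> Prop).

Lemma prime_liftE (P : R -> Prop) (x : R * S) :
  prime_lift f J P x <-> amalg f J x /\ P x.1.
Proof.
split.
- by move=> [r [j [Pr Jj ->]]]; split=> //; exists r, j.
- by move=> [[r [j [Jj ->]]] Pr]; exists r, j.
Qed.

Lemma amalg_diag (r : R) : J 0 -> amalg f J (r, f r).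
Proof. by move=> J0; exists r, 0; rewrite addr0. Qed.

Lemma fst_image_amalg_ideal (I : R * S -> Prop) :
  is_ideal J -> is_amalg_ideal f J I -> is_ideal (fst_image I).
Proof.
move=> [J0 _ _] [_ I0 Iadd Imul]; split; first by exists 0.
- by move=> a b [s Is] [t It]; exists (s + t); apply: Iadd Is It.
- by move=> r a [s Is]; exists (f r * s); apply: Imul (amalg_diag r J0) Is.
Qed.

Lemma compactly_packed_prime_lift (X : (R -> Prop) -> Prop) :
  is_ideal J -> compactly_packed_set (@is_ideal R) X ->
  compactly_packed_set (is_amalg_ideal f J)
    (fun Q => exists2 P, X P & forall x, Q x <-> prime_lift f J P x).
Proof.
move=> idealJ packedX I idealI Idx q Xq cover.
have [I_amalg _ _ _] := idealI.
pose Idx' := {iP : Idx * (R -> Prop) |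
  X iP.2 /\ forall x, q iP.1 x <-> prime_lift f J iP.2 x}.
have cover' : forall r, fst_image I r -> exists k : Idx', (sval k).2 r.
  move=> r [s Irs]; have [i qi] := cover _ Irs.
  have [P XP qP] := Xq i.
  have [_ Pr] := (prime_liftE P (r, s)).1 ((qP _).1 qi).
  by exists (exist _ (i, P) (conj XP qP)).
have [[[i P] [_ qP]] /= sub] :=
  packedX _ (fst_image_amalg_ideal idealJ idealI) Idx' _
    (fun k => (svalP k).1) cover'.
exists i => -[r s] Irs; apply/qP/prime_liftE.
by split; [exact: I_amalg | apply: sub; exists s].
Qed.

End Amalgamation.

Theorem proposition4p3 (R S : comPzRingType) (f : {rmorphism R -> S})
  (J : S -> Prop) (HJ : is_ideal J) (HJnz : exists j, J j /\ j <> 0)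
  (HJprop : ~ J 1) (HR : compactly_packed_ring R)
  (Lambda : Type) (p : Lambda -> R -> Prop)
  (Hp : forall a, is_prime_ideal (p a)) :
  compactly_packed_set (is_amalg_ideal f J)
    (fun Q => exists a, forall x, Q x <-> prime_lift f J (p a) x).
Proof.
pose family := fun P : R -> Prop => exists a, P = p a.
have packed_family : compactly_packed_set (@is_ideal R) family.
  by apply: compactly_packed_setS HR => _ [a ->]; exact: Hp.
apply: compactly_packed_setS (compactly_packed_prime_lift HJ packed_family).
by move=> Q [a Qa]; exists (p a); first by exists a.
Qed.
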